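(* The mechanism given by Algorithm 3 (defined in the context) is risk-averse truthful when all agents are hungry, i.e. when the domain of true densities, reports, and other agents' reports is the set of strictly positive piecewise-constant functions on $[0,1]$.
   Context: Algorithm 3 (for $n$ agents with strictly positive piecewise-constant densities $f_i:[0,1]\to\mathbb{R}_{>0}$, $v_i(X)=\int_X f_i$): for each agent $i$, let $0=x_0^{(i)}<x_1^{(i)}<\dots<x_{n-1}^{(i)}<x_n^{(i)}=1$ be the points with $v_i([x_j^{(i)},x_{j+1}^{(i)}))=\frac1n v_i([0,1])$ for all $j$. Set $c_0=0$ and $U=\{1,\dots,n\}$. For $j=1,\dots,n-1$: let $i_j\in U$ minimize $x_j^{(i)}$ over $i\in U$ (ties broken by smallest index), set $c_j=x_j^{(i_j)}$, give $[c_{j-1},c_j)$ to $i_j$, and remove $i_j$ from $U$. The remaining agent receives $[c_{n-1},1]$. A mechanism $\mathcal{M}$ is risk-averse truthful if for each agent $i$, each true density $f_i$ and each report $f_i'$ (in the domain), at least one holds: (1) for all reports $f_{-i}=(f_j)_{j\ne i}$ of the others, $v_i(\mathcal{M}_i(f_i,f_{-i}))\ge v_i(\mathcal{M}_i(f_i',f_{-i}))$; (2) there exist $f_{-i}$ with $v_i(\mathcal{M}_i(f_i',f_{-i}))<\frac1n v_i([0,1])$ (utilities w.r.t. the true $f_i$). *)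

From Stdlib Require Import Reals Lra Lia List ClassicalEpsilon.
From Coquelicot Require Import Coquelicot.
Import ListNotations.
Open Scope R_scope.

(* Agents are 0, 1, ..., n-1 (0-indexed); a profile assigns a density to each agent. *)

Definition pc_pos (f : R -> R) : Prop :=
  (forall x, 0 <= x <= 1 -> 0 < f x) /\
  exists (k : nat) (p a : nat -> R),
    p 0%nat = 0 /\ p k = 1 /\
    (forall m, (m < k)%nat -> p m < p (S m)) /\
    (forall m x, (m < k)%nat -> p m <= x < p (S m) -> f x = a m).

(* Value of an interval piece [a,b) (endpoints have measure zero). *)
Definition val (f : R -> R) (piece : R * R) : R := RInt f (fst piece) (snd piece).

(* x_j^{(i)}: the point x in [0,1] with v([0,x)) = j/n * v([0,1]);
   for a strictly positive integrable density it is unique. *)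
Definition mark (n : nat) (f : R -> R) (j : nat) : R :=
  epsilon (inhabits 0)
    (fun x => 0 <= x <= 1 /\ RInt f 0 x = INR j / INR n * RInt f 0 1).

(* Index in l (scanned from the current best d, l sorted increasingly) minimizing g,
   ties broken by the smallest index (strict comparison keeps the earlier one). *)
Fixpoint argmin (g : nat -> R) (d : nat) (l : list nat) : nat :=
  match l with
  | [] => d
  | i :: l' => if Rlt_dec (g i) (g d) then argmin g i l' else argmin g d l'
  end.

(* Algorithm 3: fuel = number of remaining cut steps, j = current step,
   c = c_{j-1}, U = remaining agents (increasing). Output: (agent, (left, right)). *)
Fixpoint run (n : nat) (F : nat -> R -> R) (fuel j : nat) (c : R) (U : list nat)
  : list (nat * (R * R)) :=
  match fuel with
  | O => match U with i :: _ => [(i, (c, 1))] | [] => [] end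
  | S fuel' =>
      match U with
      | [] => []
      | i0 :: U' =>
          let w := argmin (fun i => mark n (F i) j) i0 U' in
          let cj := mark n (F w) j in
          (w, (c, cj)) :: run n F fuel' (S j) cj (remove Nat.eq_dec w U)
      end
  end.

Definition alg3_alloc (n : nat) (F : nat -> R -> R) : list (nat * (R * R)) :=
  run n F (n - 1) 1 0 (seq 0 n).

Definition alg3 (n : nat) (F : nat -> R -> R) (i : nat) : R * R :=
  match find (fun e => Nat.eqb (fst e) i) (alg3_alloc n F) with
  | Some e => snd e
  | None => (0, 0)
  end.

Definition upd (G : nat -> R -> R) (i : nat) (g : R -> R) : nat -> R -> R :=
  fun j => if Nat.eq_dec j i then g else G j.

Definition risk_averse_truthful (D : (R -> R) -> Prop)
  (M : nat -> (nat -> R -> R) -> nat -> R * R) : Prop :=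
  forall (n i : nat) (f f' : R -> R), (i < n)%nat -> D f -> D f' ->
    (forall G : nat -> R -> R,
        (forall j, (j < n)%nat -> j <> i -> D (G j)) ->
        val f (M n (upd G i f) i) >= val f (M n (upd G i f') i))
    \/
    (exists G : nat -> R -> R,
        (forall j, (j < n)%nat -> j <> i -> D (G j)) /\
        val f (M n (upd G i f') i) < / INR n * RInt f 0 1).

(* The run of Algorithm 3 depends on the reports only through their marks
   x_1, ..., x_{n-1}.  Fix an agent i with true density f and a report f'.
   - If f' has the same marks as f, agent i receives the same piece whatever
     the others report, so the first alternative of risk-averse truthfulness holds.
   - Otherwise some piece [x'_{p-1}, x'_p) of the partition of f' is worth less
     than 1/n to f (if all n pieces were worth at least 1/n they would all be
     worth exactly 1/n, and the marks would agree).  Let every other agent report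
     the step density putting mass 1/n on each piece of a partition z obtained
     from x' by moving its points before step p slightly left and the others
     slightly right.  Then the others win the steps 1, ..., p-1 and agent i wins
     step p, receiving [z_{p-1}, x'_p), still worth less than 1/n to f. *)

From Stdlib Require Import Reals Lra Lia List ClassicalEpsilon Classical.
From Coquelicot Require Import Coquelicot.
Open Scope R_scope.

(** * Partitions of [0,1] and piecewise-constant densities *)

Lemma partition_mono (p : nat -> R) (k : nat) :
  (forall m, (m < k)%nat -> p m < p (S m)) ->
  forall a b, (a <= b <= k)%nat -> p a <= p b.
Proof.
  intros Hp a b [Hab Hbk]. induction b as [|b IH].
  - replace a with 0%nat by lia. lra.
  - destruct (Nat.eq_dec a (S b)) as [->|Hne]; [lra|].
    assert (p a <= p b) by (apply IH; lia). specialize (Hp b ltac:(lia)). lra.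
Qed.

Lemma partition_piece (p : nat -> R) (k : nat) :
  (forall m, (m < k)%nat -> p m < p (S m)) ->
  forall x, p 0%nat <= x < p k -> exists m, (m < k)%nat /\ p m <= x < p (S m).
Proof.
  induction k as [|k IH]; intros Hp x Hx; [lra|].
  destruct (Rlt_dec x (p k)) as [Hl|Hl].
  - destruct (IH (fun m Hm => Hp m ltac:(lia)) x ltac:(lra)) as [m [Hm Hxm]].
    exists m; split; [lia|lra].
  - exists k; split; [lia|lra].
Qed.

Section StepFunction.
Variables (f : R -> R) (p a : nat -> R) (k : nat).
Hypothesis p_incr : forall m, (m < k)%nat -> p m < p (S m).
Hypothesis f_step : forall m x, (m < k)%nat -> p m <= x < p (S m) -> f x = a m.

Lemma step_piece_ext (m : nat) : (m < k)%nat ->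
  forall x, Rmin (p m) (p (S m)) < x < Rmax (p m) (p (S m)) -> a m = f x.
Proof.
  intros Hm x Hx. specialize (p_incr m Hm).
  rewrite Rmin_left, Rmax_right in Hx by lra.
  symmetry; apply f_step; [exact Hm|lra].
Qed.

Lemma step_ex_RInt_piece (m : nat) : (m < k)%nat -> ex_RInt f (p m) (p (S m)).
Proof.
  intros Hm. apply ex_RInt_ext with (fun _ => a m); [|apply ex_RInt_const].
  exact (step_piece_ext m Hm).
Qed.

Lemma step_ex_RInt (j : nat) : (j <= k)%nat -> ex_RInt f (p 0%nat) (p j).
Proof.
  induction j as [|j IH]; intros Hj; [apply ex_RInt_point|].
  apply ex_RInt_Chasles with (p j); [apply IH; lia|apply step_ex_RInt_piece; lia].
Qed.

Lemma step_RInt_equal_mass (c : R) :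
  (forall m, (m < k)%nat -> a m * (p (S m) - p m) = c) ->
  forall j, (j <= k)%nat -> RInt f (p 0%nat) (p j) = INR j * c.
Proof.
  intros Hc. induction j as [|j IH]; intros Hj.
  - rewrite RInt_point. simpl. unfold zero; simpl; lra.
  - rewrite <- (RInt_Chasles f (p 0%nat) (p j) (p (S j)))
      by (apply step_ex_RInt || apply step_ex_RInt_piece; lia).
    rewrite IH by lia.
    rewrite (RInt_ext f (fun _ => a j))
      by (intros x Hx; symmetry; apply step_piece_ext; [lia|exact Hx]).
    rewrite RInt_const, S_INR.
    change (INR j * c + (p (S j) - p j) * a j = (INR j + 1) * c).
    specialize (Hc j ltac:(lia)). lra.
Qed.

End StepFunction.

(** * Bounded densities *)

Definition bounded_density (f : R -> R) (mu M : R) : Prop :=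
  0 < mu /\ (forall x, 0 <= x <= 1 -> mu <= f x <= M) /\ ex_RInt f 0 1.

Fixpoint max_prefix (a : nat -> R) (k : nat) : R :=
  match k with O => 0 | S k' => Rmax (a k') (max_prefix a k') end.
Fixpoint min_prefix (a : nat -> R) (k : nat) : R :=
  match k with O => 1 | S k' => Rmin (a k') (min_prefix a k') end.

Lemma max_prefix_ge (a : nat -> R) (k m : nat) : (m < k)%nat -> a m <= max_prefix a k.
Proof.
  induction k as [|k IH]; intros Hm; [lia|]. simpl.
  destruct (Nat.eq_dec m k) as [->|]; [apply Rmax_l|].
  eapply Rle_trans; [apply IH; lia|apply Rmax_r].
Qed.

Lemma min_prefix_le (a : nat -> R) (k m : nat) : (m < k)%nat -> min_prefix a k <= a m.
Proof.
  induction k as [|k IH]; intros Hm; [lia|]. simpl.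
  destruct (Nat.eq_dec m k) as [->|]; [apply Rmin_l|].
  eapply Rle_trans; [apply Rmin_r|apply IH; lia].
Qed.

Lemma min_prefix_pos (a : nat -> R) (k : nat) :
  (forall m, (m < k)%nat -> 0 < a m) -> 0 < min_prefix a k.
Proof.
  induction k as [|k IH]; intros Ha; simpl; [lra|].
  apply Rmin_glb_lt; [apply Ha; lia|apply IH; intros; apply Ha; lia].
Qed.

(* A strictly positive piecewise-constant density takes finitely many values,
   hence is a bounded density. *)
Lemma pc_pos_bounded (f : R -> R) : pc_pos f -> exists mu M, bounded_density f mu M.
Proof.
  intros [Hpos [k [p [a [H0 [Hk [Hp Hf]]]]]]].
  assert (Ha : forall m, (m < k)%nat -> a m = f (p m)).
  { intros m Hm. symmetry; apply Hf; [exact Hm|]. specialize (Hp m Hm); lra. }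
  exists (Rmin (f 1) (min_prefix a k)), (Rmax (f 1) (max_prefix a k)).
  split; [|split].
  - apply Rmin_glb_lt; [apply Hpos; lra|]. apply min_prefix_pos. intros m Hm.
    rewrite Ha by exact Hm. apply Hpos. rewrite <- H0, <- Hk.
    split; apply (partition_mono p k Hp); lia.
  - intros x Hx. destruct (Req_dec x 1) as [->|Hx1].
    + split; [apply Rmin_l|apply Rmax_l].
    + destruct (partition_piece p k Hp x ltac:(lra)) as [m [Hm Hxm]].
      rewrite (Hf m x Hm Hxm). split.
      * eapply Rle_trans; [apply Rmin_r|apply min_prefix_le; exact Hm].
      * eapply Rle_trans; [apply max_prefix_ge; exact Hm|apply Rmax_r].
  - rewrite <- H0, <- Hk. apply (step_ex_RInt f p a k Hp Hf); lia.
Qed.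

Section BoundedDensity.
Variables (f : R -> R) (mu M : R).
Hypothesis Hf : bounded_density f mu M.

Lemma bd_ex_RInt (a b : R) : 0 <= a <= 1 -> 0 <= b <= 1 -> ex_RInt f a b.
Proof.
  destruct Hf as [_ [_ Hint]]. intros Ha Hb.
  assert (Hsub : forall a b, 0 <= a <= b -> b <= 1 -> ex_RInt f a b).
  { intros a' b' H1 H2. apply (ex_RInt_Chasles_2 f 0 a' b'); [lra|].
    apply (ex_RInt_Chasles_1 f 0 b' 1); [lra|exact Hint]. }
  destruct (Rle_dec a b); [apply Hsub; lra|apply ex_RInt_swap, Hsub; lra].
Qed.

Lemma bd_chasles (a b c : R) : 0 <= a <= 1 -> 0 <= b <= 1 -> 0 <= c <= 1 ->
  RInt f a b + RInt f b c = RInt f a c.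
Proof. intros Ha Hb Hc. apply (RInt_Chasles f); apply bd_ex_RInt; assumption. Qed.

Lemma bd_RInt_bounds (a b : R) : 0 <= a -> a <= b -> b <= 1 ->
  mu * (b - a) <= RInt f a b <= M * (b - a).
Proof.
  intros Ha Hab Hb. destruct Hf as [_ [Hbnd _]].
  assert (E : ex_RInt f a b) by (apply bd_ex_RInt; lra).
  assert (Hconst : forall c, RInt (fun _ => c) a b = c * (b - a)).
  { intros c. rewrite RInt_const. change ((b - a) * c = c * (b - a)). ring. }
  rewrite <- !Hconst. split; apply RInt_le; auto using ex_RInt_const;
    intros x Hx; apply Hbnd; lra.
Qed.

Lemma bd_cumulative_strict (a b : R) : 0 <= a -> a < b -> b <= 1 ->
  RInt f 0 a < RInt f 0 b.
Proof.
  intros Ha Hab Hb. rewrite <- (bd_chasles 0 a b) by lra.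
  pose proof (bd_RInt_bounds a b Ha ltac:(lra) Hb). destruct Hf as [Hmu _].
  assert (0 < mu * (b - a)) by (apply Rmult_lt_0_compat; lra). lra.
Qed.

Lemma bd_cumulative_inj (a b : R) : 0 <= a <= 1 -> 0 <= b <= 1 ->
  RInt f 0 a = RInt f 0 b -> a = b.
Proof.
  intros Ha Hb E. destruct (Rtotal_order a b) as [H|[H|H]]; [|exact H|].
  - pose proof (bd_cumulative_strict a b ltac:(lra) H ltac:(lra)). lra.
  - pose proof (bd_cumulative_strict b a ltac:(lra) H ltac:(lra)). lra.
Qed.

Lemma bd_total_pos : 0 < RInt f 0 1.
Proof.
  pose proof (bd_cumulative_strict 0 1 ltac:(lra) ltac:(lra) ltac:(lra)) as H.
  rewrite RInt_point in H. exact H.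
Qed.

Lemma bd_upper_pos : 0 < M.
Proof. destruct Hf as [Hmu [Hbnd _]]. specialize (Hbnd 0 ltac:(lra)). lra. Qed.

Lemma bd_extend_left (c a b : R) : 0 <= c -> c <= a -> a <= b -> b <= 1 ->
  RInt f c b <= M * (a - c) + RInt f a b.
Proof.
  intros Hc Hca Hab Hb. rewrite <- (bd_chasles c a b) by lra.
  pose proof (bd_RInt_bounds c a Hc Hca ltac:(lra)). lra.
Qed.

Lemma bd_cumulative_lipschitz (a b : R) : 0 <= a <= 1 -> 0 <= b <= 1 ->
  Rabs (RInt f 0 b - RInt f 0 a) <= M * Rabs (b - a).
Proof.
  intros Ha Hb. destruct Hf as [Hmu _].
  assert (Hord : forall a b, 0 <= a -> a <= b -> b <= 1 ->
            Rabs (RInt f 0 b - RInt f 0 a) <= M * Rabs (b - a)).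
  { intros a' b' Ha' Hab Hb'.
    pose proof (bd_chasles 0 a' b' ltac:(lra) ltac:(lra) ltac:(lra)).
    assert (E : RInt f 0 b' - RInt f 0 a' = RInt f a' b') by lra. rewrite E.
    pose proof (bd_RInt_bounds a' b' Ha' Hab Hb').
    rewrite !Rabs_right by nra. nra. }
  destruct (Rle_dec a b); [apply Hord; lra|].
  rewrite Rabs_minus_sym, (Rabs_minus_sym b a). apply Hord; lra.
Qed.

(* Every intermediate mass is attained: by the intermediate value theorem
   applied to the cumulative mass, clamped to [0,1] to make it globally continuous. *)
Lemma bd_cumulative_surj (c : R) : 0 <= c <= RInt f 0 1 ->
  exists x, 0 <= x <= 1 /\ RInt f 0 x = c.
Proof.
  intros Hc.
  pose proof bd_upper_pos as HM.
  set (clamp := fun x => Rmax 0 (Rmin 1 x)).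
  assert (Hclamp_in : forall x, 0 <= clamp x <= 1).
  { intros x. unfold clamp, Rmax, Rmin. repeat destruct Rle_dec; lra. }
  assert (Hclamp_id : forall x, 0 <= x <= 1 -> clamp x = x).
  { intros x Hx. unfold clamp, Rmax, Rmin. repeat destruct Rle_dec; lra. }
  assert (Hclamp_lip : forall x y, Rabs (clamp x - clamp y) <= Rabs (x - y)).
  { intros x y. unfold clamp, Rmax, Rmin, Rabs.
    repeat destruct Rle_dec; repeat destruct Rcase_abs; lra. }
  set (h := fun x => RInt f 0 (clamp x) - c).
  assert (Hcont : continuity h).
  { intros x0 eps Heps. exists (eps / (M + 1)). split; [apply Rdiv_lt_0_compat; lra|].
    intros x [_ Hx]. simpl in *. unfold R_dist, h in *.
    replace (RInt f 0 (clamp x) - c - (RInt f 0 (clamp x0) - c))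
      with (RInt f 0 (clamp x) - RInt f 0 (clamp x0)) by ring.
    eapply Rle_lt_trans; [apply bd_cumulative_lipschitz; apply Hclamp_in|].
    eapply Rle_lt_trans; [apply Rmult_le_compat_l; [lra|apply Hclamp_lip]|].
    apply (Rmult_lt_compat_r (M + 1)) in Hx; [|lra].
    unfold Rdiv in Hx. rewrite Rmult_assoc, Rinv_l in Hx by lra.
    pose proof (Rabs_pos (x - x0)). nra. }
  destruct (IVT_cor h 0 1 Hcont ltac:(lra)) as [x [Hx Hhx]].
  { unfold h. rewrite !Hclamp_id, RInt_point by lra. unfold zero; simpl. nra. }
  exists x. split; [exact Hx|]. unfold h in Hhx. rewrite Hclamp_id in Hhx by lra. lra.
Qed.

End BoundedDensity.

(** * The marks [x_j] of a bounded density *)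

Section Marks.
Variables (f : R -> R) (mu M : R) (n : nat).
Hypothesis Hf : bounded_density f mu M.
Hypothesis Hn : (0 < n)%nat.

Lemma mark_spec (j : nat) : (j <= n)%nat ->
  0 <= mark n f j <= 1 /\ RInt f 0 (mark n f j) = INR j / INR n * RInt f 0 1.
Proof.
  intros Hj. unfold mark. apply epsilon_spec.
  pose proof (bd_total_pos f mu M Hf).
  assert (Hn' : 0 < INR n) by (apply lt_0_INR; lia).
  assert (Hjn : INR j <= INR n) by (apply le_INR; lia).
  assert (0 <= INR j / INR n <= 1).
  { split; [apply Rdiv_le_0_compat; [apply pos_INR|lra]|].
    apply Rmult_le_reg_r with (INR n); [lra|]. unfold Rdiv.
    rewrite Rmult_assoc, Rinv_l by lra. lra. }
  apply (bd_cumulative_surj f mu M Hf). nra.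
Qed.

Lemma mark_eq (j : nat) (x : R) : (j <= n)%nat -> 0 <= x <= 1 ->
  RInt f 0 x = INR j / INR n * RInt f 0 1 -> mark n f j = x.
Proof.
  intros Hj Hx E. destruct (mark_spec j Hj) as [H1 H2].
  apply (bd_cumulative_inj f mu M Hf); [exact H1|exact Hx|lra].
Qed.

Lemma mark_first : mark n f 0 = 0.
Proof.
  apply mark_eq; [lia|lra|]. rewrite RInt_point. unfold zero; simpl.
  unfold Rdiv; ring.
Qed.

Lemma mark_last : mark n f n = 1.
Proof.
  assert (0 < INR n) by (apply lt_0_INR; lia).
  apply mark_eq; [lia|lra|].
  assert (E : forall T : R, T = INR n / INR n * T) by (intros; field; lra). apply E.
Qed.

Lemma mark_strict (a b : nat) : (a < b <= n)%nat -> mark n f a < mark n f b.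
Proof.
  intros Hab.
  destruct (mark_spec a ltac:(lia)) as [Ra Ea]. destruct (mark_spec b ltac:(lia)) as [Rb Eb].
  destruct (Rlt_dec (mark n f a) (mark n f b)) as [|Hge]; [assumption|exfalso].
  assert (RInt f 0 (mark n f b) <= RInt f 0 (mark n f a)).
  { destruct (Req_dec (mark n f a) (mark n f b)) as [E|E]; [rewrite E; lra|].
    left. apply (bd_cumulative_strict f mu M Hf); lra. }
  pose proof (bd_total_pos f mu M Hf).
  assert (0 < INR n) by (apply lt_0_INR; lia).
  assert (INR a < INR b) by (apply lt_INR; lia).
  assert (INR a / INR n * RInt f 0 1 < INR b / INR n * RInt f 0 1).
  { apply Rmult_lt_compat_r; [lra|]. unfold Rdiv.
    apply Rmult_lt_compat_r; [apply Rinv_0_lt_compat|]; lra. }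
  lra.
Qed.

End Marks.

(** * A poor piece of a misreported partition *)

Lemma equal_increments (A : nat -> R) (d : R) (n : nat) :
  (forall k, (1 <= k <= n)%nat -> A k - A (k - 1)%nat >= d) ->
  A n - A 0%nat = INR n * d ->
  forall m, (m <= n)%nat -> A m - A 0%nat = INR m * d.
Proof.
  intros Hstep Htot.
  assert (Hgrow : forall a b, (a <= b <= n)%nat -> A b - A a >= INR (b - a) * d).
  { intros a b. induction b as [|b IH]; intros Hab.
    - replace a with 0%nat by lia. simpl. lra.
    - destruct (Nat.eq_dec a (S b)) as [->|Hne].
      + rewrite Nat.sub_diag. simpl. lra.
      + specialize (IH ltac:(lia)). specialize (Hstep (S b) ltac:(lia)).
        replace (S b - 1)%nat with b in Hstep by lia.
        replace (S b - a)%nat with (S (b - a)) by lia. rewrite S_INR. lra. }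
  intros m Hm.
  pose proof (Hgrow 0%nat m ltac:(lia)) as H1. pose proof (Hgrow m n ltac:(lia)) as H2.
  rewrite Nat.sub_0_r in H1. rewrite minus_INR in H2 by lia. lra.
Qed.

(* If the marks of [f'] differ from those of [f] somewhere, then some piece
   [x'_{p-1}, x'_p) of the partition of [f'] is worth less than [1/n] to [f]:
   otherwise the pieces all being worth at least [1/n] forces them all to be worth
   exactly [1/n], i.e. the marks of [f'] would be those of [f]. *)
Lemma poor_piece (f f' : R -> R) (mu M mu' M' : R) (n m0 : nat) :
  bounded_density f mu M -> bounded_density f' mu' M' ->
  (1 <= m0 < n)%nat -> mark n f m0 <> mark n f' m0 ->
  exists p, (1 <= p <= n)%nat /\
    RInt f (mark n f' (p - 1)) (mark n f' p) < RInt f 0 1 / INR n.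
Proof.
  intros Hf Hf' Hm0 Hdiff.
  set (y := mark n f' : nat -> R). set (T := RInt f 0 1).
  assert (Hn : 0 < INR n) by (apply lt_0_INR; lia).
  assert (Hy : forall k, (k <= n)%nat -> 0 <= y k <= 1)
    by (intros k Hk; apply (mark_spec f' mu' M'); auto; lia).
  apply NNPP. intros Hnone. apply Hdiff.
  assert (Hstep : forall k, (1 <= k <= n)%nat ->
            RInt f 0 (y k) - RInt f 0 (y (k - 1)%nat) >= T / INR n).
  { intros k Hk. pose proof (Hy k ltac:(lia)). pose proof (Hy (k - 1)%nat ltac:(lia)).
    pose proof (bd_chasles f mu M Hf 0 (y (k - 1)%nat) (y k) ltac:(lra) ltac:(lra) ltac:(lra)).
    destruct (Rlt_dec (RInt f (y (k - 1)%nat) (y k)) (T / INR n)) as [Hl|Hl];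
      [exfalso; apply Hnone; exists k; auto|lra]. }
  assert (Htot : RInt f 0 (y n) - RInt f 0 (y 0%nat) = INR n * (T / INR n)).
  { unfold y. rewrite (mark_last f' mu' M' n), (mark_first f' mu' M' n), RInt_point
      by (auto; lia).
    unfold zero; simpl. fold T. field. lra. }
  pose proof (equal_increments (fun k => RInt f 0 (y k)) (T / INR n) n Hstep Htot m0
                ltac:(lia)) as Hm.
  simpl in Hm. unfold y in Hm.
  rewrite (mark_first f' mu' M' n), RInt_point in Hm by (auto; lia).
  apply (mark_eq f mu M); [exact Hf|lia|lia|apply Hy; lia|].
  unfold zero in Hm; simpl in Hm. fold T.
  replace (INR m0 / INR n * T) with (INR m0 * (T / INR n)) by (field; lra). lra.
Qed.

(** * A hungry density with prescribed marks *)

Fixpoint piece_index (z : nat -> R) (K : nat) (x : R) : nat :=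
  match K with
  | O => O
  | S K' => ((if Rle_dec (z (S K')) x then 1 else 0) + piece_index z K' x)%nat
  end.

Lemma piece_index_le (z : nat -> R) (K : nat) (x : R) : (piece_index z K x <= K)%nat.
Proof. induction K; simpl; [lia|]. destruct Rle_dec; lia. Qed.

Lemma piece_index_on_piece (z : nat -> R) (n : nat) :
  (forall m, (m < n)%nat -> z m < z (S m)) ->
  forall K m x, (K < n)%nat -> (m < n)%nat -> z m <= x < z (S m) ->
  piece_index z K x = Nat.min K m.
Proof.
  intros Hz. induction K as [|K IH]; intros m x HK Hm Hx; cbn [piece_index]; [lia|].
  rewrite (IH m x ltac:(lia) Hm Hx). destruct Rle_dec as [Hl|Hl].
  - destruct (Compare_dec.le_lt_dec (S K) m) as [L|L]; [lia|].
    assert (z (S m) <= z (S K)) by (apply (partition_mono z n Hz); lia). lra.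
  - destruct (Compare_dec.le_lt_dec (S K) m) as [L|L]; [|lia].
    assert (z (S K) <= z m) by (apply (partition_mono z n Hz); lia). lra.
Qed.

(* The density putting mass exactly 1 on each piece [z m, z (m+1)) of a partition
   of [0,1] into [n] pieces (and extended by the value of the last piece). *)
Definition step_density (z : nat -> R) (n : nat) (x : R) : R :=
  / (z (S (piece_index z (n - 1) x)) - z (piece_index z (n - 1) x)).

Section StepDensity.
Variables (z : nat -> R) (n : nat).
Hypothesis Hn : (0 < n)%nat.
Hypothesis z_first : z 0%nat = 0.
Hypothesis z_last : z n = 1.
Hypothesis z_incr : forall m, (m < n)%nat -> z m < z (S m).

Lemma step_density_on_piece (m : nat) (x : R) : (m < n)%nat -> z m <= x < z (S m) ->
  step_density z n x = / (z (S m) - z m).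
Proof.
  intros Hm Hx. unfold step_density.
  rewrite (piece_index_on_piece z n z_incr (n - 1) m x ltac:(lia) Hm Hx).
  replace (Nat.min (n - 1) m) with m by lia. reflexivity.
Qed.

Lemma step_density_pc_pos : pc_pos (step_density z n).
Proof.
  split.
  - intros x _. unfold step_density. apply Rinv_0_lt_compat.
    pose proof (piece_index_le z (n - 1) x).
    pose proof (z_incr (piece_index z (n - 1) x) ltac:(lia)). lra.
  - exists n, z, (fun m => / (z (S m) - z m)).
    repeat split; auto using step_density_on_piece.
Qed.

(* Each piece has mass 1, so the [k]-th mark of this density is [z k]. *)
Lemma step_density_marks (k : nat) : (k <= n)%nat -> mark n (step_density z n) k = z k.
Proof.
  intros Hk.
  destruct (pc_pos_bounded _ step_density_pc_pos) as [mu [M Hbd]].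
  assert (Hmass : forall j, (j <= n)%nat -> RInt (step_density z n) 0 (z j) = INR j * 1).
  { rewrite <- z_first.
    apply (step_RInt_equal_mass _ z (fun m => / (z (S m) - z m)) n z_incr
             step_density_on_piece 1).
    intros m Hm. specialize (z_incr m Hm). field. lra. }
  assert (0 < INR n) by (apply lt_0_INR; lia).
  apply (mark_eq _ mu M n Hbd Hn k (z k) Hk).
  - rewrite <- z_first, <- z_last. split; apply (partition_mono z n z_incr); lia.
  - pose proof (Hmass n ltac:(lia)) as Htot. rewrite z_last in Htot.
    rewrite (Hmass k Hk), Htot.
    enough (E : INR k * 1 = INR k / INR n * (INR n * 1)) by exact E. field. lra.
Qed.

End StepDensity.

(** * Algorithm 3 *)

Lemma argmin_in (g : nat -> R) (d : nat) (l : list nat) : In (argmin g d l) (d :: l).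
Proof.
  revert d; induction l as [|a l IH]; intros d; simpl; [auto|].
  destruct Rlt_dec; [destruct (IH a)|destruct (IH d)]; simpl in *; intuition.
Qed.

Lemma argmin_le (g : nat -> R) (d : nat) (l : list nat) :
  forall x, In x (d :: l) -> g (argmin g d l) <= g x.
Proof.
  revert d; induction l as [|a l IH]; intros d x Hx; simpl.
  - destruct Hx as [->|[]]; lra.
  - destruct Rlt_dec as [Hl|Hl]; destruct Hx as [->|[->|Hx]].
    + eapply Rle_trans; [apply IH; left; reflexivity|lra].
    + apply IH; left; reflexivity.
    + apply IH; right; exact Hx.
    + apply IH; left; reflexivity.
    + eapply Rle_trans; [apply IH; left; reflexivity|lra].
    + apply IH; right; exact Hx.
Qed.

Lemma argmin_ext (g g' : nat -> R) (d : nat) (l : list nat) :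
  (forall x, g x = g' x) -> argmin g d l = argmin g' d l.
Proof.
  intros H. revert d; induction l as [|a l IH]; intros d; simpl; [reflexivity|].
  rewrite !H. destruct Rlt_dec; apply IH.
Qed.

Lemma run_marks_ext (n : nat) (F F' : nat -> R -> R) : forall fuel j c U,
  (forall k m, (j <= m < j + fuel)%nat -> mark n (F k) m = mark n (F' k) m) ->
  run n F fuel j c U = run n F' fuel j c U.
Proof.
  induction fuel as [|fuel IH]; intros j c U H; simpl; [reflexivity|].
  destruct U as [|i0 U']; [reflexivity|].
  rewrite (argmin_ext (fun i => mark n (F i) j) (fun i => mark n (F' i) j))
    by (intros x; apply H; lia).
  rewrite H by lia. f_equal. apply IH. intros k m Hm; apply H; lia.
Qed.

Lemma alg3_marks_ext (n : nat) (F F' : nat -> R -> R) (i : nat) :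
  (forall k m, (1 <= m < n)%nat -> mark n (F k) m = mark n (F' k) m) ->
  alg3 n F i = alg3 n F' i.
Proof.
  intros H. unfold alg3, alg3_alloc.
  rewrite (run_marks_ext n F F'); [reflexivity|]. intros k m Hm; apply H; lia.
Qed.

Lemma NoDup_remove_elt (l : list nat) (x : nat) : NoDup l -> NoDup (remove Nat.eq_dec x l).
Proof.
  induction l as [|a l IH]; intros H; simpl; [exact H|].
  inversion H; subst. destruct Nat.eq_dec; [auto|].
  constructor; [|auto]. intros Hin. apply in_remove in Hin. tauto.
Qed.

Lemma length_remove_elt (l : list nat) (x : nat) : NoDup l -> In x l ->
  length (remove Nat.eq_dec x l) = pred (length l).
Proof.
  induction l as [|a l IH]; intros H Hx; simpl; [destruct Hx|].
  inversion H; subst. destruct Nat.eq_dec as [->|Hne].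
  - rewrite notin_remove; auto.
  - destruct Hx as [->|Hx]; [congruence|]. simpl. rewrite IH by assumption.
    destruct l; [destruct Hx|]; simpl; lia.
Qed.

Section Deviator.
Variables (n : nat) (F : nat -> R -> R) (i p : nat) (y z : nat -> R).
Hypothesis others_marks : forall w m, w <> i -> (1 <= m <= n)%nat -> mark n (F w) m = z m.
Hypothesis own_marks : forall m, (1 <= m <= n)%nat -> mark n (F i) m = y m.
Hypothesis others_first : forall m, (1 <= m < p)%nat -> z m < y m.
Hypothesis own_first : (p < n)%nat -> y p < z p.
Hypothesis p_le_n : (p <= n)%nat.
Hypothesis y_last : y n = 1.

(* Invariant: at step [j <= p], the current cut is [z (j-1)] and [i] is still waiting. *)
Lemma run_deviator : forall fuel j c U,
  (j + fuel = n)%nat -> (1 <= j <= p)%nat -> c = z (j - 1)%nat ->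
  NoDup U -> In i U -> length U = S fuel ->
  find (fun e => Nat.eqb (fst e) i) (run n F fuel j c U) = Some (i, (z (p - 1)%nat, y p)).
Proof.
  induction fuel as [|fuel IH]; intros j c U Hjf Hjp Hc HU Hi Hl.
  - assert (j = n) by lia. replace p with n in * by lia. subst j c.
    destruct U as [|u [|u' U']]; simpl in Hl; try lia.
    destruct Hi as [->|[]]. simpl. rewrite Nat.eqb_refl, y_last. reflexivity.
  - destruct U as [|i0 U']; [destruct Hi|]. cbn [run].
    set (g := fun k => mark n (F k) j).
    set (w := argmin g i0 U').
    assert (Hwle : forall x, In x (i0 :: U') -> g w <= g x) by apply argmin_le.
    destruct (Nat.eq_dec j p) as [->|Njp].
    + assert (Ew : w = i).
      { destruct (Nat.eq_dec w i) as [|Hne]; [assumption|].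
        specialize (Hwle i Hi). unfold g in Hwle.
        rewrite others_marks, own_marks in Hwle by lia. specialize (own_first ltac:(lia)). lra. }
      rewrite Ew. cbn [find fst]. rewrite Nat.eqb_refl.
      unfold g. rewrite own_marks by lia. subst c. reflexivity.
    + assert (Ho : exists o, In o (i0 :: U') /\ o <> i).
      { destruct (Nat.eq_dec i0 i) as [->|Hne]; [|exists i0; split; [left|]; auto].
        destruct U' as [|u U'']; simpl in Hl; [lia|].
        exists u. split; [simpl; auto|]. inversion HU; subst. intros ->. simpl in *. tauto. }
      destruct Ho as [o [Ho Hoi]].
      assert (Nw : w <> i).
      { intros Ew. specialize (Hwle o Ho). unfold g in Hwle. rewrite Ew in Hwle.
        rewrite own_marks, (others_marks o j) in Hwle by (auto; lia).
        specialize (others_first j ltac:(lia)). lra. }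
      cbn [find fst]. replace (Nat.eqb w i) with false by (symmetry; apply Nat.eqb_neq; auto).
      apply IH; [lia|lia| |apply NoDup_remove_elt; auto|apply in_in_remove; auto|].
      * replace (S j - 1)%nat with j by lia. unfold g. rewrite others_marks by (auto; lia).
        reflexivity.
      * rewrite length_remove_elt by (apply argmin_in || assumption). rewrite Hl. reflexivity.
Qed.

Lemma alg3_deviator : (i < n)%nat -> (1 <= p)%nat -> z 0%nat = 0 ->
  alg3 n F i = (z (p - 1)%nat, y p).
Proof.
  intros Hin Hp Hz0. unfold alg3, alg3_alloc.
  rewrite (run_deviator (n - 1) 1 0 (seq 0 n)); [reflexivity|lia|lia|exact (eq_sym Hz0)|
    apply seq_NoDup|apply in_seq; lia|rewrite length_seq; lia].
Qed.

End Deviator.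

(** * The punishing report *)

Lemma min_gap (y : nat -> R) (n : nat) :
  (forall k, (1 <= k <= n)%nat -> y (k - 1)%nat < y k) ->
  exists d, 0 < d /\ forall k, (1 <= k <= n)%nat -> d <= y k - y (k - 1)%nat.
Proof.
  induction n as [|n IH]; intros H.
  - exists 1; split; [lra|]. intros; lia.
  - destruct IH as [d [Hd Hk]]; [intros k Hk; apply H; lia|].
    exists (Rmin d (y (S n) - y (S n - 1)%nat)). split.
    + apply Rmin_glb_lt; [exact Hd|]. specialize (H (S n) ltac:(lia)). lra.
    + intros k Hk'. destruct (Nat.eq_dec k (S n)) as [->|Hne]; [apply Rmin_r|].
      eapply Rle_trans; [apply Rmin_l|apply Hk; lia].
Qed.

Definition shifted_partition (y : nat -> R) (n p : nat) (eps : R) (k : nat) : R :=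
  if Nat.eqb k 0 then 0 else if Nat.leb n k then 1
  else if Nat.ltb k p then y k - eps else y k + eps.

Section ShiftedPartition.
Variables (y : nat -> R) (n p : nat) (eps : R).
Hypothesis Hn : (0 < n)%nat.
Hypothesis y_first : y 0%nat = 0.
Hypothesis y_last : y n = 1.
Hypothesis eps_pos : 0 < eps.
Hypothesis eps_small : forall k, (1 <= k <= n)%nat -> 3 * eps <= y k - y (k - 1)%nat.

Let z := shifted_partition y n p eps.

Lemma shifted_first : z 0%nat = 0.
Proof. reflexivity. Qed.

Lemma shifted_last : z n = 1.
Proof.
  unfold z, shifted_partition. destruct (Nat.eqb_spec n 0); [lia|].
  now rewrite Nat.leb_refl.
Qed.

(* Moving each point by [eps], a third of any gap, keeps the partition increasing. *)
Lemma shifted_incr (m : nat) : (m < n)%nat -> z m < z (S m).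
Proof.
  intros Hm. pose proof (eps_small (S m) ltac:(lia)) as Hg.
  replace (S m - 1)%nat with m in Hg by lia.
  unfold z, shifted_partition.
  destruct (Nat.eqb_spec m 0) as [E0|E0]; destruct (Nat.eqb_spec (S m) 0); try lia;
  destruct (Nat.leb_spec0 n m); try lia;
  destruct (Nat.leb_spec0 n (S m)) as [L|L];
  destruct (Nat.ltb_spec0 m p); destruct (Nat.ltb_spec0 (S m) p);
  try (replace (S m) with n in Hg by lia; rewrite y_last in Hg);
  try (subst m; rewrite y_first in Hg); (lia || lra).
Qed.

Lemma shifted_below (m : nat) : (1 <= m < p)%nat -> (p <= n)%nat -> z m < y m.
Proof.
  intros Hm Hp. unfold z, shifted_partition.
  destruct (Nat.eqb_spec m 0); [lia|]. destruct (Nat.leb_spec0 n m); [lia|].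
  destruct (Nat.ltb_spec0 m p); [lra|lia].
Qed.

Lemma shifted_above : (1 <= p < n)%nat -> y p < z p.
Proof.
  intros Hp. unfold z, shifted_partition.
  destruct (Nat.eqb_spec p 0); [lia|]. destruct (Nat.leb_spec0 n p); [lia|].
  destruct (Nat.ltb_spec0 p p); [lia|lra].
Qed.

Lemma shifted_close : (1 <= p <= n)%nat ->
  0 <= y (p - 1)%nat - z (p - 1)%nat <= eps.
Proof.
  intros Hp. unfold z, shifted_partition.
  destruct (Nat.eqb_spec (p - 1) 0) as [->|]; [rewrite y_first; lra|].
  destruct (Nat.leb_spec0 n (p - 1)); [lia|]. destruct (Nat.ltb_spec0 (p - 1) p); [lra|lia].
Qed.

End ShiftedPartition.

(* If some piece [x'_{p-1}, x'_p) of the partition of the report [f'] is worth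
   less than [1/n] to the true density [f], the other agents can report a common
   hungry density whose marks trail [x'] slightly before step [p] and lead it
   slightly from step [p] on; agent [i] then receives [x'_{p-1} - eps, x'_p),
   still worth less than [1/n] for small [eps]. *)
Lemma punishing_report (n i p : nat) (f f' : R -> R) (mu M mu' M' : R) :
  (i < n)%nat -> bounded_density f mu M -> bounded_density f' mu' M' ->
  (1 <= p <= n)%nat ->
  RInt f (mark n f' (p - 1)) (mark n f' p) < RInt f 0 1 / INR n ->
  exists g, pc_pos g /\ val f (alg3 n (upd (fun _ => g) i f') i) < / INR n * RInt f 0 1.
Proof.
  intros Hin Hf Hf' Hp Hpoor.
  set (y := mark n f') in *.
  assert (Hn : (0 < n)%nat) by lia.
  assert (Hy : forall k, (k <= n)%nat -> 0 <= y k <= 1)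
    by (intros k Hk; apply (mark_spec f' mu' M'); auto).
  destruct (min_gap y n) as [d [Hd Hgap]].
  { intros k Hk. apply (mark_strict f' mu' M'); auto; lia. }
  set (s := RInt f 0 1 / INR n - RInt f (y (p - 1)%nat) (y p)).
  assert (HM : 0 < M) by exact (bd_upper_pos f mu M Hf).
  set (eps := Rmin (d / 3) (s / (M + 1))).
  assert (Heps : 0 < eps) by (apply Rmin_glb_lt; apply Rdiv_lt_0_compat; unfold s; lra).
  assert (Heps_gap : forall k, (1 <= k <= n)%nat -> 3 * eps <= y k - y (k - 1)%nat).
  { intros k Hk. specialize (Hgap k Hk). pose proof (Rmin_l (d / 3) (s / (M + 1))) as Hl.
    fold eps in Hl. lra. }
  assert (Heps_loss : M * eps < s).
  { pose proof (Rmin_r (d / 3) (s / (M + 1))) as Hr. fold eps in Hr.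
    apply (Rmult_le_compat_r (M + 1)) in Hr; [|lra].
    unfold Rdiv in Hr. rewrite Rmult_assoc, Rinv_l in Hr by lra. nra. }
  assert (Hy0 : y 0%nat = 0) by exact (mark_first f' mu' M' n Hf' Hn).
  assert (Hyn : y n = 1) by exact (mark_last f' mu' M' n Hf' Hn).
  set (z := shifted_partition y n p eps).
  assert (Hz0 : z 0%nat = 0) by reflexivity.
  assert (Hzn : z n = 1) by exact (shifted_last y n p eps Hn).
  pose proof (shifted_incr y n p eps Hn Hy0 Hyn Heps Heps_gap) as Hz.
  exists (step_density z n). split; [exact (step_density_pc_pos z n Hn Hz0 Hzn Hz)|].
  rewrite (alg3_deviator n _ i p y z).
  - pose proof (shifted_close y n p eps Hn Hy0 Heps Hp) as Hclose. fold z in Hclose.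
    pose proof (Hy (p - 1)%nat ltac:(lia)). pose proof (Hy p ltac:(lia)).
    assert (0 <= z (p - 1)%nat) by (rewrite <- Hz0; apply (partition_mono z n Hz); lia).
    assert (y (p - 1)%nat < y p) by (apply (mark_strict f' mu' M'); auto; lia).
    pose proof (bd_extend_left f mu M Hf (z (p - 1)%nat) (y (p - 1)%nat) (y p)
                  ltac:(lra) ltac:(lra) ltac:(lra) ltac:(lra)).
    assert (M * (y (p - 1)%nat - z (p - 1)%nat) <= M * eps) by (apply Rmult_le_compat_l; lra).
    unfold val, s, Rdiv in *; simpl. lra.
  - intros w m Hw Hm. unfold upd. destruct Nat.eq_dec; [contradiction|].
    apply step_density_marks; auto; lia.
  - intros m Hm. unfold upd. destruct Nat.eq_dec; [reflexivity|contradiction].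
  - intros m Hm. apply (shifted_below y n p eps Hn Heps); lia.
  - intros Hpn. apply (shifted_above y n p eps Hn Heps); lia.
  - lia.
  - exact Hyn.
  - exact Hin.
  - lia.
  - exact Hz0.
Qed.

Theorem mainTheorem10 : risk_averse_truthful pc_pos alg3.
Proof.
  intros n i f f' Hin Hf Hf'.
  destruct (pc_pos_bounded f Hf) as [mu [M Hbf]].
  destruct (pc_pos_bounded f' Hf') as [mu' [M' Hbf']].
  destruct (classic (forall m, (1 <= m < n)%nat -> mark n f m = mark n f' m))
    as [Hsame|Hdiff].
  - left. intros G _.
    rewrite (alg3_marks_ext n (upd G i f) (upd G i f') i); [apply Rge_refl|].
    intros k m Hm. unfold upd. destruct Nat.eq_dec; [exact (Hsame m Hm)|reflexivity].
  - right.
    apply not_all_ex_not in Hdiff. destruct Hdiff as [m0 Hm0].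
    apply imply_to_and in Hm0. destruct Hm0 as [Hm0 Hdiff].
    destruct (poor_piece f f' mu M mu' M' n m0 Hbf Hbf' Hm0 Hdiff) as [p [Hp Hpoor]].
    destruct (punishing_report n i p f f' mu M mu' M' Hin Hbf Hbf' Hp Hpoor)
      as [g [Hg Hval]].
    exists (fun _ => g). split; [intros; exact Hg|exact Hval].
Qed.
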